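(* $\widetilde{\mathbb{R}}_{sm}$, with the partial order $\le$ and with join $r\vee s=\max(r,s)$ and meet $r\wedge s=\min(r,s)$, is an $l$-ring (a partially ordered ring that is a lattice for its order).
   Context: Let $I=(0,1]$. $\widetilde{\mathbb{R}}_{sm}=\mathcal{E}_{M,sm}/\mathcal{N}_{sm}$ where $\mathcal{E}_{M,sm}$ is the set of smooth $(r_\varepsilon)_{\varepsilon\in I}\in\mathbb{R}^I$ with $|r_\varepsilon|=O(\varepsilon^{-N})$ for some $N$, and $\mathcal{N}_{sm}$ those smooth nets with $|r_\varepsilon|=O(\varepsilon^m)$ for all $m$. Similarly $\widetilde{\mathbb{R}}_{co}$ is defined with continuous nets; the natural map $\tau_{sm}:\widetilde{\mathbb{R}}_{sm}\to\widetilde{\mathbb{R}}_{co}$, $[(r_\varepsilon)]\mapsto[(r_\varepsilon)]$, is a ring isomorphism. For $r,s\in\widetilde{\mathbb{R}}_{sm}$, $r\le s$ means there are representatives with $r_\varepsilon\le s_\varepsilon$ for all $\varepsilon\in I$. For $r=[(r_\varepsilon)_\varepsilon]$, $s=[(s_\varepsilon)_\varepsilon]$: $\min(r,s)=\tau_{sm}^{-1}([(\min(r_\varepsilon,s_\varepsilon))_\varepsilon])$, $\max(r,s)=\tau_{sm}^{-1}([(\max(r_\varepsilon,s_\varepsilon))_\varepsilon])$. *)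

From Stdlib Require Import Reals.
From Coquelicot Require Import Coquelicot.
Open Scope R_scope.

(* A net (r_eps)_{eps in I}, I = (0,1], is represented by a function R -> R;
   only its values on I matter. *)
Definition net := R -> R.

Definition inI (e : R) : Prop := 0 < e <= 1.

Definition smooth_net (r : net) : Prop :=
  exists d : R, 0 < d /\
    forall (n : nat) (x : R), 0 < x < 1 + d -> ex_derive_n r n x.

Definition moderate (r : net) : Prop :=
  exists (N : nat) (C e0 : R), 0 < e0 <= 1 /\
    forall e, 0 < e < e0 -> Rabs (r e) <= C * / (e ^ N).

Definition negligible (r : net) : Prop :=
  forall m : nat, exists (C e0 : R), 0 < e0 <= 1 /\
    forall e, 0 < e < e0 -> Rabs (r e) <= C * e ^ m.

Definition E_sm (r : net) : Prop := smooth_net r /\ moderate r.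
Definition N_sm (r : net) : Prop := smooth_net r /\ negligible r.

(* equality in R~_sm = E_{M,sm} / N_sm of the classes of r and s *)
Definition eq_sm (r s : net) : Prop := N_sm (fun e => r e - s e).

Definition add_net (r s : net) : net := fun e => r e + s e.
Definition mul_net (r s : net) : net := fun e => r e * s e.
Definition zero_net : net := fun _ => 0.

Definition le_sm (r s : net) : Prop :=
  exists r' s' : net, E_sm r' /\ E_sm s' /\ eq_sm r r' /\ eq_sm s s' /\
    forall e, inI e -> r' e <= s' e.

(* m represents min([r],[s]) = tau_sm^{-1}([(min(r_eps,s_eps))_eps]):
   m is a smooth moderate net whose class in R~_co equals the class of the
   continuous net (min(r_eps,s_eps))_eps, i.e. their difference is negligible. *)
Definition is_min_sm (r s m : net) : Prop :=
  E_sm m /\ negligible (fun e => m e - Rmin (r e) (s e)).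

Definition is_max_sm (r s m : net) : Prop :=
  E_sm m /\ negligible (fun e => m e - Rmax (r e) (s e)).

(* For smooth moderate nets, [r] <= [s] holds exactly when the
   positive part of r - s is negligible: representatives r' <= s' bound it by
   |r - r'| + |s - s'|, and conversely a smooth net just above max(r,s) is a
   representative of [s] lying above r.  The order axioms, compatibility with
   + and *, and the lattice properties then all reduce to pointwise inequalities
   between positive parts.  Smooth representatives of max and min come from
   max(a,b) = (a + b + |a - b|)/2 with |x| replaced by sqrt(x^2 + f^2), where
   f(eps) = exp(-1/eps) is smooth on (0,oo) and negligible. *)

From Stdlib Require Import Reals Lra.
From Coquelicot Require Import Coquelicot.
Open Scope R_scope.

Fixpoint Cn_on (n : nat) (U : R -> Prop) (f : R -> R) : Prop :=
  match n with
  | O => True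
  | S n => (forall x, U x -> ex_derive f x) /\ Cn_on n U (Derive f)
  end.

Lemma Cn_on_pred n U f : Cn_on (S n) U f -> Cn_on n U f.
Proof.
  revert f; induction n as [|n IH]; intros f [f_ex Cf]; [exact I|].
  split; [exact f_ex | apply IH, Cf].
Qed.

Lemma Cn_on_sub n U V f : (forall x, V x -> U x) -> Cn_on n U f -> Cn_on n V f.
Proof.
  intros VU; revert f; induction n as [|n IH]; intros f Cf; [exact I|].
  destruct Cf as [f_ex Cf]; split; auto.
Qed.

Lemma Derive_n_S f k : Derive_n f (S k) = Derive_n (Derive f) k.
Proof.
  induction k as [|k IH]; [reflexivity|].
  change (Derive (Derive_n f (S k)) = Derive (Derive_n (Derive f) k)).
  now rewrite IH.
Qed.

Lemma Cn_on_ex_derive_n U f :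
  (forall n, Cn_on n U f) <-> forall n x, U x -> ex_derive_n f n x.
Proof.
  split.
  - intros Cf n; revert f Cf; induction n as [|n IH]; intros f Cf x Ux; [exact I|].
    destruct n as [|n]; [exact (proj1 (Cf 1%nat) x Ux)|].
    change (ex_derive (Derive_n f (S n)) x); rewrite Derive_n_S.
    exact (IH (Derive f) (fun k => proj2 (Cf (S k))) x Ux).
  - intros f_ex n; revert f f_ex; induction n as [|n IH]; intros f f_ex; [exact I|].
    split; [exact (f_ex 1%nat)|].
    apply IH; intros [|k] x Ux; [exact I|].
    change (ex_derive (Derive_n (Derive f) k) x); rewrite <- Derive_n_S.
    exact (f_ex (S (S k)) x Ux).
Qed.

Section Cn_on_open.
Variable U : R -> Prop.
Hypothesis U_open : open U.

Lemma Cn_on_ext n f g : (forall x, U x -> f x = g x) -> Cn_on n U f -> Cn_on n U g.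
Proof.
  revert f g; induction n as [|n IH]; intros f g fg Cf; [exact I|].
  destruct Cf as [f_ex Cf].
  assert (loc_fg : forall x, U x -> locally x (fun t => f t = g t)).
  { intros x Ux; apply (filter_imp U); [exact fg|exact (U_open x Ux)]. }
  split.
  - intros x Ux; apply (ex_derive_ext_loc f g); auto.
  - apply (IH (Derive f)); auto. intros x Ux; apply Derive_ext_loc, loc_fg, Ux.
Qed.

Lemma Cn_on_S_is_derive n f f' :
  (forall x, U x -> is_derive f x (f' x)) -> Cn_on n U f' -> Cn_on (S n) U f.
Proof.
  intros df Cf'; split.
  - intros x Ux; exists (f' x); apply df, Ux.
  - apply (Cn_on_ext n f'); auto.
    intros x Ux; symmetry; apply is_derive_unique, df, Ux.
Qed.

Lemma Cn_on_const n c : Cn_on n U (fun _ => c).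
Proof.
  revert c; induction n as [|n IH]; intros c; [exact I|].
  apply (Cn_on_S_is_derive n _ (fun _ => 0)); auto.
  intros x _; apply (is_derive_const c).
Qed.

Lemma Cn_on_plus n f g : Cn_on n U f -> Cn_on n U g -> Cn_on n U (fun x => f x + g x).
Proof.
  revert f g; induction n as [|n IH]; intros f g Cf Cg; [exact I|].
  destruct Cf as [f_ex Cf], Cg as [g_ex Cg].
  apply (Cn_on_S_is_derive n _ (fun x => Derive f x + Derive g x)); auto.
  intros x Ux; apply (is_derive_plus f g); apply Derive_correct; auto.
Qed.

Lemma Cn_on_mult n f g : Cn_on n U f -> Cn_on n U g -> Cn_on n U (fun x => f x * g x).
Proof.
  revert f g; induction n as [|n IH]; intros f g Cf Cg; [exact I|].
  pose proof (Cn_on_pred n U f Cf) as Cf'; pose proof (Cn_on_pred n U g Cg) as Cg'.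
  destruct Cf as [f_ex Cf], Cg as [g_ex Cg].
  apply (Cn_on_S_is_derive n _ (fun x => Derive f x * g x + f x * Derive g x)).
  - intros x Ux; apply Derive.is_derive_mult; apply Derive_correct; auto.
  - apply Cn_on_plus; auto.
Qed.

Lemma Cn_on_opp n f : Cn_on n U f -> Cn_on n U (fun x => - f x).
Proof.
  intros Cf; apply (Cn_on_ext n (fun x => -1 * f x)); [intros; ring|].
  apply Cn_on_mult; auto; apply Cn_on_const.
Qed.

Lemma Cn_on_minus n f g : Cn_on n U f -> Cn_on n U g -> Cn_on n U (fun x => f x - g x).
Proof. intros Cf Cg; apply Cn_on_plus, Cn_on_opp; auto. Qed.

Lemma Cn_on_comp n V h f : open V -> (forall x, U x -> V (f x)) ->
  Cn_on n V h -> Cn_on n U f -> Cn_on n U (fun x => h (f x)).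
Proof.
  intros V_open UV; revert h f UV; induction n as [|n IH]; intros h f UV Ch Cf; [exact I|].
  pose proof (Cn_on_pred n U f Cf) as Cf'.
  destruct Ch as [h_ex Ch], Cf as [f_ex Cf].
  apply (Cn_on_S_is_derive n _ (fun x => Derive f x * Derive h (f x))).
  - intros x Ux; apply (is_derive_comp h f); apply Derive_correct; auto.
  - apply Cn_on_mult; auto.
Qed.

End Cn_on_open.

Lemma Cn_on_exp n U : open U -> Cn_on n U exp.
Proof.
  intros U_open; induction n as [|n IH]; [exact I|].
  apply (Cn_on_S_is_derive U U_open n _ exp); [intros x _; apply is_derive_exp | exact IH].
Qed.

Lemma open_Rlt_0 : open (Rlt 0).
Proof. apply open_gt. Qed.

Lemma Cn_on_inv n : Cn_on n (Rlt 0) Rinv.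
Proof.
  induction n as [|n IH]; [exact I|].
  apply (Cn_on_S_is_derive _ open_Rlt_0 n _ (fun x => -1 * (/ x * / x))).
  - intros x x_pos; auto_derive; [lra|field; lra].
  - apply Cn_on_mult, Cn_on_mult; auto using open_Rlt_0, Cn_on_const.
Qed.

Lemma Cn_on_sqrt n : Cn_on n (Rlt 0) sqrt.
Proof.
  induction n as [|n IH]; [exact I|].
  apply (Cn_on_S_is_derive _ open_Rlt_0 n _ (fun x => / (2 * sqrt x))).
  - intros x x_pos; pose proof (sqrt_lt_R0 x x_pos).
    auto_derive; [lra|field; lra].
  - apply (Cn_on_comp _ open_Rlt_0 n (Rlt 0)); auto using open_Rlt_0.
    + intros x x_pos; pose proof (sqrt_lt_R0 x x_pos); lra.
    + apply Cn_on_inv.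
    + apply Cn_on_mult; auto using open_Rlt_0, Cn_on_const.
Qed.

Definition near_I (d x : R) : Prop := 0 < x < 1 + d.

Lemma open_near_I d : open (near_I d).
Proof.
  apply (open_and (fun x => 0 < x) (fun x => x < 1 + d)); [apply open_gt|apply open_lt].
Qed.

Lemma smooth_net_iff r : smooth_net r <-> exists d, 0 < d /\ forall n, Cn_on n (near_I d) r.
Proof.
  split; intros [d [d_pos Cr]]; exists d; split; auto;
    apply (Cn_on_ex_derive_n (near_I d) r); exact Cr.
Qed.

Lemma smooth_net_binop (op : net -> net -> net) :
  (forall U, open U -> (forall x, U x -> 0 < x) ->
     forall n f g, Cn_on n U f -> Cn_on n U g -> Cn_on n U (op f g)) ->
  forall r s, smooth_net r -> smooth_net s -> smooth_net (op r s).
Proof.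
  intros Cop r s Sr Ss.
  apply smooth_net_iff in Sr as [d1 [d1_pos Cr]]; apply smooth_net_iff in Ss as [d2 [d2_pos Cs]].
  apply smooth_net_iff; exists (Rmin d1 d2); split; [now apply Rmin_pos|].
  assert (shrink : forall d, Rmin d1 d2 <= d -> forall x, near_I (Rmin d1 d2) x -> near_I d x).
  { intros d le_d x [x_pos x_lt]; split; lra. }
  intros n; apply Cop.
  - apply open_near_I.
  - intros x [x_pos _]; exact x_pos.
  - apply (Cn_on_sub n (near_I d1)); [apply shrink, Rmin_l|apply Cr].
  - apply (Cn_on_sub n (near_I d2)); [apply shrink, Rmin_r|apply Cs].
Qed.

Definition flat (x : R) : R := exp (- / x).

Lemma flat_pos x : 0 < flat x.
Proof. apply exp_pos. Qed.

Definition soft_abs (r : net) : net := fun x => sqrt (r x * r x + flat x * flat x).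

Definition soft_max (r s : net) : net :=
  fun x => (r x + s x + soft_abs (fun y => r y - s y) x) / 2.
Definition soft_min (r s : net) : net :=
  fun x => (r x + s x - soft_abs (fun y => r y - s y) x) / 2.

Section Soft_max.
Variable U : R -> Prop.
Hypothesis U_open : open U.
Hypothesis U_pos : forall x, U x -> 0 < x.

Lemma Cn_on_flat n : Cn_on n U flat.
Proof.
  apply (Cn_on_comp U U_open n (fun _ => True) exp (fun x => - / x));
    auto using open_true, Cn_on_exp.
  apply (Cn_on_opp U U_open); auto; apply (Cn_on_sub n (Rlt 0)); [exact U_pos|apply Cn_on_inv].
Qed.

Lemma Cn_on_soft_abs n r : Cn_on n U r -> Cn_on n U (soft_abs r).
Proof.
  intros Cr; apply (Cn_on_comp U U_open n (Rlt 0) sqrt); auto using open_Rlt_0, Cn_on_sqrt.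
  - intros x _; pose proof (flat_pos x); nra.
  - apply (Cn_on_plus U U_open); apply (Cn_on_mult U U_open); auto using Cn_on_flat.
Qed.

Lemma Cn_on_soft_max n r s : Cn_on n U r -> Cn_on n U s -> Cn_on n U (soft_max r s).
Proof.
  intros Cr Cs; unfold soft_max, Rdiv.
  apply (Cn_on_mult U U_open); [|apply (Cn_on_const U U_open)].
  apply (Cn_on_plus U U_open);
    [apply (Cn_on_plus U U_open) | apply Cn_on_soft_abs, (Cn_on_minus U U_open)]; auto.
Qed.

Lemma Cn_on_soft_min n r s : Cn_on n U r -> Cn_on n U s -> Cn_on n U (soft_min r s).
Proof.
  intros Cr Cs; unfold soft_min, Rdiv.
  apply (Cn_on_mult U U_open); [|apply (Cn_on_const U U_open)].
  apply (Cn_on_minus U U_open);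
    [apply (Cn_on_plus U U_open) | apply Cn_on_soft_abs, (Cn_on_minus U U_open)]; auto.
Qed.

End Soft_max.

Lemma inI_Rmin e1 e2 : 0 < e1 <= 1 -> 0 < e2 <= 1 -> 0 < Rmin e1 e2 <= 1.
Proof. intros; split; [now apply Rmin_pos | pose proof (Rmin_l e1 e2); lra]. Qed.

Lemma lt_Rmin e e1 e2 : 0 < e < Rmin e1 e2 -> 0 < e < e1 /\ 0 < e < e2.
Proof. pose proof (Rmin_l e1 e2); pose proof (Rmin_r e1 e2); lra. Qed.

Lemma Rinv_pow_le_add e N M : 0 < e <= 1 -> / e ^ N <= / e ^ (N + M).
Proof.
  intros He; rewrite pow_add, Rinv_mult.
  assert (0 < / e ^ N) by (apply Rinv_0_lt_compat, pow_lt; lra).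
  assert (1 <= / e ^ M).
  { rewrite <- Rinv_1; apply Rinv_le_contravar; [apply pow_lt; lra|].
    rewrite <- (pow1 M); apply pow_incr; lra. }
  nra.
Qed.

Lemma moderate_le f g :
  moderate g -> (forall e, inI e -> Rabs (f e) <= g e) -> moderate f.
Proof.
  intros [N [C [e0 [He0 bound]]]] fg; exists N, C, e0; split; auto.
  intros e He; specialize (fg e ltac:(unfold inI; lra)).
  pose proof (Rle_abs (g e)); pose proof (bound e He); lra.
Qed.

Lemma moderate_abs f : moderate f -> moderate (fun e => Rabs (f e)).
Proof.
  intros [N [C [e0 [He0 bound]]]]; exists N, C, e0; split; auto.
  intros e He; rewrite Rabs_Rabsolu; auto.
Qed.

Lemma moderate_const c : moderate (fun _ => c).
Proof. exists 0%nat, (Rabs c), 1; split; [lra|]. intros e _; simpl; rewrite Rinv_1; lra. Qed.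

Lemma moderate_plus f g : moderate f -> moderate g -> moderate (fun e => f e + g e).
Proof.
  intros [N1 [C1 [e1 [He1 bound1]]]] [N2 [C2 [e2 [He2 bound2]]]].
  exists (N1 + N2)%nat, (Rabs C1 + Rabs C2), (Rmin e1 e2); split; [now apply inI_Rmin|].
  intros e He; apply lt_Rmin in He as [He_1 He_2].
  assert (weaken : forall C N M, / e ^ N <= / e ^ (N + M) ->
                     C * / e ^ N <= Rabs C * / e ^ (N + M)).
  { intros C N M le_inv; assert (0 < / e ^ N) by (apply Rinv_0_lt_compat, pow_lt; lra).
    pose proof (Rle_abs C); pose proof (Rabs_pos C); nra. }
  pose proof (weaken C1 N1 N2 (Rinv_pow_le_add e N1 N2 ltac:(lra))) as w1.
  pose proof (weaken C2 N2 N1 (Rinv_pow_le_add e N2 N1 ltac:(lra))) as w2.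
  rewrite Nat.add_comm in w2.
  pose proof (bound1 e He_1); pose proof (bound2 e He_2).
  pose proof (Rabs_triang (f e) (g e)); lra.
Qed.

Lemma moderate_mult f g : moderate f -> moderate g -> moderate (fun e => f e * g e).
Proof.
  intros [N1 [C1 [e1 [He1 bound1]]]] [N2 [C2 [e2 [He2 bound2]]]].
  exists (N1 + N2)%nat, (C1 * C2), (Rmin e1 e2); split; [now apply inI_Rmin|].
  intros e He; apply lt_Rmin in He as [He_1 He_2].
  rewrite Rabs_mult, pow_add, Rinv_mult.
  replace (C1 * C2 * (/ e ^ N1 * / e ^ N2)) with ((C1 * / e ^ N1) * (C2 * / e ^ N2)) by ring.
  apply Rmult_le_compat; auto using Rabs_pos.
Qed.

Lemma negligible_le f g :
  negligible g -> (forall e, inI e -> Rabs (f e) <= g e) -> negligible f.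
Proof.
  intros g_negl fg m; destruct (g_negl m) as [C [e0 [He0 bound]]]; exists C, e0; split; auto.
  intros e He; specialize (fg e ltac:(unfold inI; lra)).
  pose proof (Rle_abs (g e)); pose proof (bound e He); lra.
Qed.

Lemma negligible_abs f : negligible f -> negligible (fun e => Rabs (f e)).
Proof.
  intros f_negl m; destruct (f_negl m) as [C [e0 [He0 bound]]]; exists C, e0; split; auto.
  intros e He; rewrite Rabs_Rabsolu; auto.
Qed.

Lemma negligible_plus f g : negligible f -> negligible g -> negligible (fun e => f e + g e).
Proof.
  intros f_negl g_negl m.
  destruct (f_negl m) as [C1 [e1 [He1 bound1]]], (g_negl m) as [C2 [e2 [He2 bound2]]].
  exists (C1 + C2), (Rmin e1 e2); split; [now apply inI_Rmin|].
  intros e He; apply lt_Rmin in He as [He_1 He_2].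
  pose proof (bound1 e He_1); pose proof (bound2 e He_2).
  pose proof (Rabs_triang (f e) (g e)); lra.
Qed.

Lemma negligible_mult f g : moderate f -> negligible g -> negligible (fun e => f e * g e).
Proof.
  intros [N [C1 [e1 [He1 bound1]]]] g_negl m.
  destruct (g_negl (m + N)%nat) as [C2 [e2 [He2 bound2]]].
  exists (C1 * C2), (Rmin e1 e2); split; [now apply inI_Rmin|].
  intros e He; apply lt_Rmin in He as [He_1 He_2].
  rewrite Rabs_mult.
  replace (C1 * C2 * e ^ m) with ((C1 * / e ^ N) * (C2 * e ^ (m + N)))
    by (rewrite pow_add; field; apply pow_nonzero; lra).
  apply Rmult_le_compat; auto using Rabs_pos.
Qed.

Lemma pow_div_fact_le_exp x m : 0 <= x -> x ^ m / INR (Factorial.fact m) <= exp x.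
Proof.
  intros Hx; eapply Rle_trans; [|apply (exp_ge_taylor x m Hx)].
  assert (terms_nonneg : forall k, 0 <= x ^ k / INR (Factorial.fact k)).
  { intros k; apply Rmult_le_pos; [now apply pow_le|].
    left; apply Rinv_0_lt_compat, INR_fact_lt_0. }
  destruct m as [|m]; [simpl; lra|].
  rewrite tech5; pose proof (cond_pos_sum _ m terms_nonneg); lra.
Qed.

Lemma flat_le_1 x : 0 < x -> flat x <= 1.
Proof.
  intros x_pos; unfold flat; rewrite <- exp_0; left; apply exp_increasing.
  pose proof (Rinv_0_lt_compat x x_pos); lra.
Qed.

Lemma negligible_flat : negligible flat.
Proof.
  intros m; exists (INR (Factorial.fact m)), 1; split; [lra|]; intros e [e_pos _].
  assert (inv_e_pos : 0 < / e) by now apply Rinv_0_lt_compat.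
  assert (fact_pos : 0 < INR (Factorial.fact m)) by apply INR_fact_lt_0.
  assert (0 < (/ e) ^ m / INR (Factorial.fact m))
    by (apply Rdiv_lt_0_compat; auto; now apply pow_lt).
  unfold flat; rewrite Rabs_pos_eq, exp_Ropp by (left; apply exp_pos).
  apply (Rle_trans _ (/ ((/ e) ^ m / INR (Factorial.fact m)))).
  - apply Rinv_le_contravar; auto; apply pow_div_fact_le_exp; lra.
  - rewrite pow_inv; right; field; split; [apply pow_nonzero|]; lra.
Qed.

Ltac destruct_max_abs :=
  unfold Rmax, Rmin, Rabs;
  repeat match goal with
  | |- context [Rle_dec ?a ?b] => destruct (Rle_dec a b)
  | |- context [Rcase_abs ?a] => destruct (Rcase_abs a)
  end.

Lemma sqrt_sum_sq_bounds a b : 0 <= b -> Rabs a <= sqrt (a * a + b * b) <= Rabs a + b.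
Proof.
  intros b_nonneg; pose proof (Rabs_pos a) as abs_nonneg.
  assert (abs_sq : Rabs a * Rabs a = a * a)
    by (rewrite <- Rabs_mult; apply Rabs_pos_eq, Rle_0_sqr).
  split.
  - rewrite <- (sqrt_square (Rabs a)) at 1 by lra; apply sqrt_le_1_alt; nra.
  - rewrite <- (sqrt_square (Rabs a + b)) by lra; apply sqrt_le_1_alt; nra.
Qed.

Lemma soft_max_bounds r s x :
  Rmax (r x) (s x) <= soft_max r s x <= Rmax (r x) (s x) + flat x.
Proof.
  pose proof (sqrt_sum_sq_bounds (r x - s x) (flat x) (Rlt_le _ _ (flat_pos x))) as bounds.
  unfold soft_max, soft_abs; revert bounds; destruct_max_abs; lra.
Qed.

Lemma soft_min_bounds r s x :
  Rmin (r x) (s x) - flat x <= soft_min r s x <= Rmin (r x) (s x).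
Proof.
  pose proof (sqrt_sum_sq_bounds (r x - s x) (flat x) (Rlt_le _ _ (flat_pos x))) as bounds.
  unfold soft_min, soft_abs; revert bounds; destruct_max_abs; lra.
Qed.

Lemma moderate_minus f g : moderate f -> moderate g -> moderate (fun e => f e - g e).
Proof.
  intros f_mod g_mod.
  apply (moderate_le _ (fun e => Rabs (f e) + Rabs (g e))).
  - apply moderate_plus; now apply moderate_abs.
  - intros e _; destruct_max_abs; lra.
Qed.

Lemma moderate_soft_max f g : moderate f -> moderate g -> moderate (soft_max f g).
Proof.
  intros f_mod g_mod.
  apply (moderate_le _ (fun e => Rabs (f e) + Rabs (g e) + 1)).
  - apply moderate_plus; [apply moderate_plus; now apply moderate_abs | apply moderate_const].
  - intros e [e_pos _]; pose proof (soft_max_bounds f g e) as bounds; pose proof (flat_pos e).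
    pose proof (flat_le_1 e e_pos); revert bounds; destruct_max_abs; lra.
Qed.

Lemma moderate_soft_min f g : moderate f -> moderate g -> moderate (soft_min f g).
Proof.
  intros f_mod g_mod.
  apply (moderate_le _ (fun e => Rabs (f e) + Rabs (g e) + 1)).
  - apply moderate_plus; [apply moderate_plus; now apply moderate_abs | apply moderate_const].
  - intros e [e_pos _]; pose proof (soft_min_bounds f g e) as bounds; pose proof (flat_pos e).
    pose proof (flat_le_1 e e_pos); revert bounds; destruct_max_abs; lra.
Qed.

Lemma E_sm_binop (op : net -> net -> net) :
  (forall U, open U -> (forall x, U x -> 0 < x) ->
     forall n f g, Cn_on n U f -> Cn_on n U g -> Cn_on n U (op f g)) ->
  (forall f g, moderate f -> moderate g -> moderate (op f g)) ->
  forall r s, E_sm r -> E_sm s -> E_sm (op r s).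
Proof.
  intros Cop mod_op r s [Sr Mr] [Ss Ms]; split; [apply smooth_net_binop|apply mod_op]; auto.
Qed.

Lemma E_sm_plus r s : E_sm r -> E_sm s -> E_sm (add_net r s).
Proof.
  apply (E_sm_binop add_net); [|apply moderate_plus].
  intros U U_open _; exact (Cn_on_plus U U_open).
Qed.

Lemma E_sm_minus r s : E_sm r -> E_sm s -> E_sm (fun e => r e - s e).
Proof.
  apply (E_sm_binop (fun f g e => f e - g e)); [|apply moderate_minus].
  intros U U_open _; exact (Cn_on_minus U U_open).
Qed.

Lemma E_sm_mult r s : E_sm r -> E_sm s -> E_sm (mul_net r s).
Proof.
  apply (E_sm_binop mul_net); [|apply moderate_mult].
  intros U U_open _; exact (Cn_on_mult U U_open).
Qed.

Lemma E_sm_soft_max r s : E_sm r -> E_sm s -> E_sm (soft_max r s).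
Proof. apply E_sm_binop; [apply Cn_on_soft_max | apply moderate_soft_max]. Qed.

Lemma E_sm_soft_min r s : E_sm r -> E_sm s -> E_sm (soft_min r s).
Proof. apply E_sm_binop; [apply Cn_on_soft_min | apply moderate_soft_min]. Qed.

Lemma E_sm_zero : E_sm zero_net.
Proof.
  split; [|apply moderate_const].
  apply smooth_net_iff; exists 1; split; [lra|]; intros n.
  exact (Cn_on_const _ (open_near_I 1) n 0).
Qed.

Lemma eq_sm_of_negligible r s :
  E_sm r -> E_sm s -> negligible (fun e => r e - s e) -> eq_sm r s.
Proof. intros Er Es N; split; [apply E_sm_minus|]; auto. Qed.

Lemma eq_sm_refl r : E_sm r -> eq_sm r r.
Proof.
  intros Er; apply eq_sm_of_negligible, (negligible_le _ flat negligible_flat); auto.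
  intros e _; replace (r e - r e) with 0 by ring; rewrite Rabs_R0; apply Rlt_le, flat_pos.
Qed.

Definition excess (r s : net) : net := fun e => Rmax 0 (r e - s e).

Lemma le_sm_iff_negligible_excess r s :
  E_sm r -> E_sm s -> le_sm r s <-> negligible (excess r s).
Proof.
  intros Er Es; split.
  - intros [r' [s' [_ [_ [[_ Nr] [[_ Ns] le_r's']]]]]].
    apply (negligible_le _ (fun e => Rabs (r e - r' e) + Rabs (s e - s' e))).
    + apply negligible_plus; now apply negligible_abs.
    + intros e He; pose proof (le_r's' e He); unfold excess; destruct_max_abs; lra.
  - intros N; exists r, (soft_max r s).
    assert (Em : E_sm (soft_max r s)) by now apply E_sm_soft_max.
    refine (conj Er (conj Em (conj (eq_sm_refl r Er) (conj _ _)))).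
    + apply eq_sm_of_negligible; auto.
      apply (negligible_le _ (fun e => flat e + excess r s e));
        [apply negligible_plus; [exact negligible_flat|exact N]|].
      intros e _; pose proof (soft_max_bounds r s e) as bounds; revert bounds.
      unfold excess; destruct_max_abs; lra.
    + intros e _; pose proof (soft_max_bounds r s e); pose proof (Rmax_l (r e) (s e)); lra.
Qed.

Lemma le_sm_refl r : E_sm r -> le_sm r r.
Proof.
  intros Er; apply le_sm_iff_negligible_excess, (negligible_le _ flat negligible_flat); auto.
  intros e _; pose proof (flat_pos e); unfold excess; destruct_max_abs; lra.
Qed.

Lemma le_sm_antisym r s : E_sm r -> E_sm s -> le_sm r s -> le_sm s r -> eq_sm r s.
Proof.
  intros Er Es rs sr.
  apply le_sm_iff_negligible_excess in rs, sr; auto.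
  apply eq_sm_of_negligible, (negligible_le _ _ (negligible_plus _ _ rs sr)); auto.
  intros e _; unfold excess; destruct_max_abs; lra.
Qed.

Lemma le_sm_trans r s t : E_sm r -> E_sm s -> E_sm t -> le_sm r s -> le_sm s t -> le_sm r t.
Proof.
  intros Er Es Et rs st.
  apply le_sm_iff_negligible_excess in rs, st; auto.
  apply le_sm_iff_negligible_excess, (negligible_le _ _ (negligible_plus _ _ rs st)); auto.
  intros e _; unfold excess; destruct_max_abs; lra.
Qed.

Lemma le_sm_add r s t : E_sm r -> E_sm s -> E_sm t ->
  le_sm r s -> le_sm (add_net r t) (add_net s t).
Proof.
  intros Er Es Et rs; apply le_sm_iff_negligible_excess in rs; auto.
  apply le_sm_iff_negligible_excess, (negligible_le _ _ rs); auto using E_sm_plus.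
  intros e _; unfold excess, add_net; destruct_max_abs; lra.
Qed.

Lemma le_sm_mul_nonneg r s : E_sm r -> E_sm s ->
  le_sm zero_net r -> le_sm zero_net s -> le_sm zero_net (mul_net r s).
Proof.
  intros Er Es r_nonneg s_nonneg.
  apply le_sm_iff_negligible_excess in r_nonneg, s_nonneg; auto using E_sm_zero.
  apply le_sm_iff_negligible_excess; auto using E_sm_zero, E_sm_mult.
  apply (negligible_le _
           (fun e => Rabs (r e) * excess zero_net s e + Rabs (s e) * excess zero_net r e)).
  - destruct Er as [_ Mr], Es as [_ Ms].
    apply negligible_plus; apply negligible_mult; auto using moderate_abs.
  - intros e _; unfold excess, zero_net, mul_net; destruct_max_abs; nra.
Qed.

Lemma exists_max_sm r s : E_sm r -> E_sm s -> exists m, is_max_sm r s m.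
Proof.
  intros Er Es; exists (soft_max r s); split; [now apply E_sm_soft_max|].
  apply (negligible_le _ flat negligible_flat).
  intros e _; pose proof (soft_max_bounds r s e) as bounds; revert bounds; destruct_max_abs; lra.
Qed.

Lemma exists_min_sm r s : E_sm r -> E_sm s -> exists m, is_min_sm r s m.
Proof.
  intros Er Es; exists (soft_min r s); split; [now apply E_sm_soft_min|].
  apply (negligible_le _ flat negligible_flat).
  intros e _; pose proof (soft_min_bounds r s e) as bounds; revert bounds; destruct_max_abs; lra.
Qed.

Lemma is_max_sm_join r s m : E_sm r -> E_sm s -> is_max_sm r s m ->
  le_sm r m /\ le_sm s m /\ forall u, E_sm u -> le_sm r u -> le_sm s u -> le_sm m u.
Proof.
  intros Er Es [Em Nm]; apply negligible_abs in Nm.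
  split; [|split].
  - apply le_sm_iff_negligible_excess, (negligible_le _ _ Nm); auto.
    intros e _; unfold excess; destruct_max_abs; lra.
  - apply le_sm_iff_negligible_excess, (negligible_le _ _ Nm); auto.
    intros e _; unfold excess; destruct_max_abs; lra.
  - intros u Eu ru su; apply le_sm_iff_negligible_excess in ru, su; auto.
    apply le_sm_iff_negligible_excess; auto.
    apply (negligible_le _ _ (negligible_plus _ _ Nm (negligible_plus _ _ ru su))).
    intros e _; unfold excess; destruct_max_abs; lra.
Qed.

Lemma is_min_sm_meet r s m : E_sm r -> E_sm s -> is_min_sm r s m ->
  le_sm m r /\ le_sm m s /\ forall u, E_sm u -> le_sm u r -> le_sm u s -> le_sm u m.
Proof.
  intros Er Es [Em Nm]; apply negligible_abs in Nm.
  split; [|split].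
  - apply le_sm_iff_negligible_excess, (negligible_le _ _ Nm); auto.
    intros e _; unfold excess; destruct_max_abs; lra.
  - apply le_sm_iff_negligible_excess, (negligible_le _ _ Nm); auto.
    intros e _; unfold excess; destruct_max_abs; lra.
  - intros u Eu ur us; apply le_sm_iff_negligible_excess in ur, us; auto.
    apply le_sm_iff_negligible_excess; auto.
    apply (negligible_le _ _ (negligible_plus _ _ Nm (negligible_plus _ _ ur us))).
    intros e _; unfold excess; destruct_max_abs; lra.
Qed.

Theorem proposition4p13 :
  (* <= is a partial order on R~_sm *)
  (forall r, E_sm r -> le_sm r r) /\
  (forall r s, E_sm r -> E_sm s -> le_sm r s -> le_sm s r -> eq_sm r s) /\
  (forall r s t, E_sm r -> E_sm s -> E_sm t ->
     le_sm r s -> le_sm s t -> le_sm r t) /\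
  (* compatibility with the ring operations *)
  (forall r s t, E_sm r -> E_sm s -> E_sm t ->
     le_sm r s -> le_sm (add_net r t) (add_net s t)) /\
  (forall r s, E_sm r -> E_sm s ->
     le_sm zero_net r -> le_sm zero_net s -> le_sm zero_net (mul_net r s)) /\
  (* max and min are defined (tau_sm^{-1} applies) *)
  (forall r s, E_sm r -> E_sm s -> exists m, is_max_sm r s m) /\
  (forall r s, E_sm r -> E_sm s -> exists m, is_min_sm r s m) /\
  (* max(r,s) is the join (least upper bound) *)
  (forall r s m, E_sm r -> E_sm s -> is_max_sm r s m ->
     le_sm r m /\ le_sm s m /\
     forall u, E_sm u -> le_sm r u -> le_sm s u -> le_sm m u) /\
  (* min(r,s) is the meet (greatest lower bound) *)
  (forall r s m, E_sm r -> E_sm s -> is_min_sm r s m ->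
     le_sm m r /\ le_sm m s /\
     forall u, E_sm u -> le_sm u r -> le_sm u s -> le_sm u m).
Proof.
  exact (conj le_sm_refl (conj le_sm_antisym (conj le_sm_trans (conj le_sm_add
          (conj le_sm_mul_nonneg (conj exists_max_sm (conj exists_min_sm
          (conj is_max_sm_join is_min_sm_meet)))))))).
Qed.
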